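(* Let a vertex model on the periodic honeycomb lattice with period $1\times1$ have strictly positive signatures, be realizable, and satisfy Assumption (A). Let the realization produce odd matchgate signatures $(0,\gamma_1,\beta_1,0,\alpha_1,0,0,\delta_1)$ at the white vertex and $(0,\gamma_2,\beta_2,0,\alpha_2,0,0,\delta_2)$ at the black vertex, and set $a=\alpha_1\alpha_2$, $b=\beta_1\beta_2$, $c=\gamma_1\gamma_2$, $d=\delta_1\delta_2$. Then $$(a+b-c-d)(a+c-b-d)(a+d-b-c)>0\qquad\text{and}\qquad a+b+c+d>0.$$
   Context: Signatures are vectors indexed by local configurations $000,001,\dots,111$ of the incident $(a,b,c)$-edges. A realization assigns to each edge an invertible $2\times 2$ matrix $T_e$ (for period $1\times 1$ all edges of a type share one matrix) and to each vertex a matchgate signature $m_v$ with $m_v=(T_a\otimes T_b\otimes T_c)r_v$ at black and $m_v=((T_a\otimes T_b\otimes T_c)^t)^{-1}r_v$ at white vertices, satisfying the parity constraint; after relabelling bases one may assume all matchgates are odd, i.e. $m_v$ vanishes at $000,011,101,110$. Assumption (A): all entries of base change matrices are nonzero and all matchgate signature entries not forced to vanish by parity are nonzero. *)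

From HB Require Import structures.
From mathcomp Require Import all_boot all_order all_algebra.
Set Implicit Arguments. Unset Strict Implicit. Unset Printing Implicit Defensive.
Import Order.TTheory GRing.Theory Num.Theory.
Local Open Scope ring_scope.

(* Local configurations of the incident (a,b,c)-edges are indexed by
   i : 'I_8 read in binary: i = 4*x_a + 2*x_b + x_c, so 000,001,...,111
   correspond to 0,1,...,7. *)
Definition bit (k : nat) (i : 'I_8) : 'I_2 := inord ((i %/ 2 ^ k) %% 2).

Definition kron3 (R : pzRingType) (Ta Tb Tc : 'M[R]_2) : 'M[R]_8 :=
  \matrix_(i < 8, j < 8)
     (Ta (bit 2 i) (bit 2 j) * Tb (bit 1 i) (bit 1 j) * Tc (bit 0 i) (bit 0 j)).

Definition odd_sig (R : pzRingType) (al be ga de : R) : 'cV[R]_8 :=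
  \col_(i < 8) nth 0 [:: 0; ga; be; 0; al; 0; 0; de] i.

From HB Require Import structures.
From mathcomp Require Import all_boot all_order all_algebra.
From mathcomp Require Import ring.
Import Order.TTheory GRing.Theory Num.Theory.
Set Implicit Arguments. Unset Strict Implicit. Unset Printing Implicit Defensive.
Local Open Scope ring_scope.

(* With K = Ta (x) Tb (x) Tc, the realization equations give
   rw^T N rb = m_w^T (K N K^-1) m_b for every 8x8 matrix N, and the left side is
   positive whenever N is nonnegative and nonzero.  Taking N = E_ij (x) 1 (x) 1
   shows that Y_a = (b + c) - (a + d) is real and nonzero and that
   Ta^-1 diag(|Y_a| + Y_a, |Y_a| - Y_a) Ta is entrywise positive; likewise for
   the edges b and c.  For N the tensor product of these three positive matrices
   the right side collapses to a sum of four monomials in the diagonal entries,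
   each containing a vanishing factor unless Y_a Y_b Y_c < 0.  N = 1 gives
   a + b + c + d > 0. *)

Lemma bitE k (i : 'I_8) : bit k i = if odd (iter k half i) then ord_max else ord0.
Proof.
have divn_iter_half n : (n %/ 2 ^ k)%N = iter k half n.
  elim: k => [|k IH]; first by rewrite expn0 divn1.
  by rewrite expnSr divnMA IH divn2 iterS.
apply: val_inj; rewrite /bit /= inordK; last by rewrite ltn_mod.
by rewrite modn2 divn_iter_half; case: odd.
Qed.

Lemma eq_bits (i j : 'I_8) :
  [&& bit 2 i == bit 2 j, bit 1 i == bit 1 j & bit 0 i == bit 0 j] = (i == j).
Proof.
by rewrite !bitE; case: i => [[|[|[|[|[|[|[|[|i]]]]]]]] Hi] //;
  case: j => [[|[|[|[|[|[|[|[|j]]]]]]]] Hj].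
Qed.

Definition ord_of_bits (x y z : 'I_2) : 'I_8 := inord (4 * x + 2 * y + z).

Lemma bits_ord_of_bits (x y z : 'I_2) :
  [/\ bit 2 (ord_of_bits x y z) = x, bit 1 (ord_of_bits x y z) = y
    & bit 0 (ord_of_bits x y z) = z].
Proof.
by case: x y z => [[|[|x]] Hx] // [[|[|y]] Hy] // [[|[|z]] Hz] //;
  rewrite /ord_of_bits !bitE inordK //; split; apply: val_inj.
Qed.

Local Notation o0 := (@ord0 1).
Local Notation o1 := (@ord_max 1).

Lemma lift0_ord2 : lift o0 (ord0 : 'I_1) = o1.
Proof. exact: val_inj. Qed.

Lemma kron3_id (R : pzRingType) : kron3 (1%:M : 'M[R]_2) 1%:M 1%:M = 1%:M.
Proof.
apply/matrixP => i j; rewrite !mxE -!natrM !mulnb -eq_bits.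
by case: (bit 2 i == _); case: (bit 1 i == _); case: (bit 0 i == _).
Qed.

Lemma kron3_mul (R : comPzRingType) (A B C A' B' C' : 'M[R]_2) :
  kron3 A B C *m kron3 A' B' C' = kron3 (A *m A') (B *m B') (C *m C').
Proof.
apply/matrixP => i j; rewrite !mxE !big_ord_recl !big_ord0 !mxE !bitE /=.
rewrite !addr0 !lift0_ord2; ring.
Qed.

Lemma unitmx_kron3 (R : comUnitRingType) (A B C : 'M[R]_2) :
  A \in unitmx -> B \in unitmx -> C \in unitmx -> kron3 A B C \in unitmx.
Proof.
move=> uA uB uC.
suff /mulmx1_unit[] : kron3 A B C *m kron3 (invmx A) (invmx B) (invmx C) = 1%:M by [].
by rewrite kron3_mul !mulmxV // kron3_id.
Qed.

Lemma invmx_kron3 (R : comUnitRingType) (A B C : 'M[R]_2) :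
  A \in unitmx -> B \in unitmx -> C \in unitmx ->
  invmx (kron3 A B C) = kron3 (invmx A) (invmx B) (invmx C).
Proof.
move=> uA uB uC; rewrite -[RHS]mul1mx -(mulVmx (unitmx_kron3 uA uB uC)).
by rewrite -mulmxA kron3_mul !mulmxV // kron3_id mulmx1.
Qed.

Definition semipositive (R : numDomainType) m n (A : 'M[R]_(m, n)) :=
  (forall i j, 0 <= A i j) /\ exists i j, 0 < A i j.

Lemma semipositive_delta (R : numDomainType) m n (i : 'I_m) (j : 'I_n) :
  semipositive (delta_mx i j : 'M[R]_(m, n)).
Proof. by split=> [x y|]; [rewrite mxE ler0n | exists i, j; rewrite mxE !eqxx ltr01]. Qed.

Lemma semipositive_1 (R : numDomainType) n : semipositive (1%:M : 'M[R]_n.+1).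
Proof.
by split=> [x y|]; [rewrite mxE ler0n | exists ord0, ord0; rewrite mxE eqxx ltr01].
Qed.

Lemma positive_semipositive (R : numDomainType) m n (A : 'M[R]_(m.+1, n.+1)) :
  (forall i j, 0 < A i j) -> semipositive A.
Proof. by move=> hA; split=> [i j|]; [exact: ltW | exists ord0, ord0]. Qed.

Lemma kron3_semipositive (R : numDomainType) (A B C : 'M[R]_2) :
  semipositive A -> semipositive B -> semipositive C -> semipositive (kron3 A B C).
Proof.
move=> [hA [i1 [j1 pA]]] [hB [i2 [j2 pB]]] [hC [i3 [j3 pC]]].
split=> [x y|]; first by rewrite mxE !mulr_ge0.
exists (ord_of_bits i1 i2 i3), (ord_of_bits j1 j2 j3); rewrite mxE.
have [-> -> ->] := bits_ord_of_bits i1 i2 i3.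
have [-> -> ->] := bits_ord_of_bits j1 j2 j3.
by rewrite !mulr_gt0.
Qed.

Definition bform (R : pzRingType) n (u : 'cV[R]_n) (M : 'M[R]_n) (v : 'cV[R]_n) : R :=
  (u^T *m M *m v) 0 0.

Lemma bformE (R : pzRingType) n (u : 'cV[R]_n) M v :
  bform u M v = \sum_i \sum_k u i 0 * M i k * v k 0.
Proof.
rewrite /bform mxE exchange_big /=; apply: eq_bigr => k _.
by rewrite mxE big_distrl /=; apply: eq_bigr => i _; rewrite mxE.
Qed.

Lemma bform_conj (R : comUnitRingType) n (K M : 'M[R]_n) (u v : 'cV[R]_n) :
  K \in unitmx ->
  bform u M v = bform (invmx K^T *m u) (K *m M *m invmx K) (K *m v).
Proof. by move=> uK; rewrite /bform trmx_mul trmx_inv trmxK !mulmxA !mulmxKV. Qed.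

Lemma bform_gt0 (R : numDomainType) n (u v : 'cV[R]_n) (M : 'M[R]_n) :
  (forall i, 0 < u i 0) -> (forall i, 0 < v i 0) -> semipositive M -> 0 < bform u M v.
Proof.
move=> hu hv [hM [i0 [k0 hM0]]]; rewrite bformE (bigD1 i0) //= (bigD1 k0) //=.
have ge0 i k : 0 <= u i 0 * M i k * v k 0 by rewrite !mulr_ge0 // ltW.
rewrite ltr_wpDr //; first by apply: sumr_ge0 => i _; apply: sumr_ge0.
by rewrite ltr_wpDr ?sumr_ge0 // !mulr_gt0.
Qed.

Definition diag2 (R : pzRingType) (x y : R) : 'M[R]_2 :=
  \matrix_(i, j) if i == j then (if i == o0 then x else y) else 0.

Section OddSignatures.
Variables (R : comPzRingType) (al1 be1 ga1 de1 al2 be2 ga2 de2 : R).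
Let m1 := odd_sig al1 be1 ga1 de1.
Let m2 := odd_sig al2 be2 ga2 de2.

Lemma bform_odd_kron3 (A B C : 'M[R]_2) :
  bform m1 (kron3 A B C) m2 =
  ga1 * (A o0 o0 * B o0 o0 * C o1 o1) * ga2 +
  ga1 * (A o0 o0 * B o0 o1 * C o1 o0) * be2 +
  ga1 * (A o0 o1 * B o0 o0 * C o1 o0) * al2 +
  ga1 * (A o0 o1 * B o0 o1 * C o1 o1) * de2 +
  be1 * (A o0 o0 * B o1 o0 * C o0 o1) * ga2 +
  be1 * (A o0 o0 * B o1 o1 * C o0 o0) * be2 +
  be1 * (A o0 o1 * B o1 o0 * C o0 o0) * al2 +
  be1 * (A o0 o1 * B o1 o1 * C o0 o1) * de2 +
  al1 * (A o1 o0 * B o0 o0 * C o0 o1) * ga2 +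
  al1 * (A o1 o0 * B o0 o1 * C o0 o0) * be2 +
  al1 * (A o1 o1 * B o0 o0 * C o0 o0) * al2 +
  al1 * (A o1 o1 * B o0 o1 * C o0 o1) * de2 +
  de1 * (A o1 o0 * B o1 o0 * C o1 o1) * ga2 +
  de1 * (A o1 o0 * B o1 o1 * C o1 o0) * be2 +
  de1 * (A o1 o1 * B o1 o0 * C o1 o0) * al2 +
  de1 * (A o1 o1 * B o1 o1 * C o1 o1) * de2.
Proof.
rewrite bformE !big_ord_recl !big_ord0 !mxE !bitE /=.
by rewrite !mul0r !mulr0 !add0r !addr0; ring.
Qed.

Lemma bform_odd_kron3_1l (A : 'M[R]_2) :
  bform m1 (kron3 A 1%:M 1%:M) m2 =
  (be1 * be2 + ga1 * ga2) * A o0 o0 + (al1 * al2 + de1 * de2) * A o1 o1.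
Proof. by rewrite bform_odd_kron3 !mxE /=; ring. Qed.

Lemma bform_odd_kron3_1m (B : 'M[R]_2) :
  bform m1 (kron3 1%:M B 1%:M) m2 =
  (ga1 * ga2 + al1 * al2) * B o0 o0 + (be1 * be2 + de1 * de2) * B o1 o1.
Proof. by rewrite bform_odd_kron3 !mxE /=; ring. Qed.

Lemma bform_odd_kron3_1r (C : 'M[R]_2) :
  bform m1 (kron3 1%:M 1%:M C) m2 =
  (be1 * be2 + al1 * al2) * C o0 o0 + (ga1 * ga2 + de1 * de2) * C o1 o1.
Proof. by rewrite bform_odd_kron3 !mxE /=; ring. Qed.

Lemma bform_odd_kron3_diag2 (x0 x1 y0 y1 z0 z1 : R) :
  bform m1 (kron3 (diag2 x0 x1) (diag2 y0 y1) (diag2 z0 z1)) m2 =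
  ga1 * ga2 * (x0 * y0 * z1) + be1 * be2 * (x0 * y1 * z0) +
  al1 * al2 * (x1 * y0 * z0) + de1 * de2 * (x1 * y1 * z1).
Proof. by rewrite bform_odd_kron3 !mxE /=; ring. Qed.

End OddSignatures.

Lemma ord2P (i : 'I_2) : i = o0 \/ i = o1.
Proof. by case: i => [[|[|i]]] Hi //; [left|right]; apply: val_inj. Qed.

Lemma mulmx2E (R : pzRingType) (A B : 'M[R]_2) i j :
  (A *m B) i j = A i o0 * B o0 j + A i o1 * B o1 j.
Proof. by rewrite mxE !big_ord_recl big_ord0 addr0 lift0_ord2. Qed.

Lemma sqr_real (C : numClosedFieldType) (z : C) : 0 < z ^+ 2 -> z \is Num.real.
Proof.
move=> hz; have : z ^+ 2 == sqrtC (z ^+ 2) ^+ 2 by rewrite sqrtCK.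
have hs : 0 <= sqrtC (z ^+ 2) by rewrite sqrtC_ge0 ltW.
by rewrite eqf_sqr => /orP[/eqP->|/eqP->]; rewrite ?rpredN ger0_real.
Qed.

Lemma rank_one_trace_one_pos (C : numClosedFieldType) (Y s p00 p01 p10 p11 : C) :
  p00 + p11 = 1 -> p00 * p11 = p01 * p10 ->
  0 < Y * p00 + s -> 0 < Y * p11 + s -> 0 < Y * p01 -> 0 < Y * p10 ->
  [/\ Y \is Num.real, Y != 0, 0 < `|Y| + Y * (2%:R * p00 - 1)
    & 0 < `|Y| + Y * (2%:R * p11 - 1)].
Proof.
move=> htr hdet hp hq hx hy.
(* The p's are the entries of a rank-one idempotent, so Y^2 is the square of the
   real number (Y p00 + s) - (Y p11 + s) plus the positive 4 (Y p01)(Y p10). *)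
have eY : Y ^+ 2 = (Y * p00 + s - (Y * p11 + s)) ^+ 2 + 4%:R * (Y * p01 * (Y * p10)).
  have -> : (Y * p00 + s - (Y * p11 + s)) ^+ 2 + 4%:R * (Y * p01 * (Y * p10)) =
            Y ^+ 2 * ((p00 + p11) ^+ 2 - 4%:R * (p00 * p11 - p01 * p10)) by ring.
  by rewrite htr hdet subrr mulr0 subr0 expr1n mulr1.
have rD : Y * p00 + s - (Y * p11 + s) \is Num.real by apply: rpredB; apply: gtr0_real.
have xy0 : 0 < 4%:R * (Y * p01 * (Y * p10)) by rewrite mulr_gt0 ?ltr0n // mulr_gt0.
have Y2 : 0 < Y ^+ 2 by rewrite eY ltr_wpDl // -real_normK // exprn_ge0.
have rY := sqr_real Y2.
have nY : Y != 0 by apply: contraTneq Y2 => ->; rewrite expr0n ltxx.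
have : `|Y * p00 + s - (Y * p11 + s)| < `|Y|.
  by rewrite -ltr_sqr ?nnegrE ?normr_ge0 // !real_normK // eY ltr_pwDr.
rewrite real_ltr_norml // => /andP[l1 l2].
have hp11 : p11 = 1 - p00 by rewrite -htr addrC addKr.
have e0 : Y * (2%:R * p00 - 1) = Y * p00 + s - (Y * p11 + s) by rewrite hp11; ring.
have e1 : Y * (2%:R * p11 - 1) = - (Y * p00 + s - (Y * p11 + s)) by rewrite hp11; ring.
by split; rewrite // ?e0 ?e1 -ltrBlDl sub0r ?ltrN2.
Qed.

Lemma conj_diag2_gt0 (C : numClosedFieldType) (T : 'M[C]_2) (s0 s1 : C) :
  T \in unitmx ->
  (forall i j, 0 < s0 * (T *m delta_mx i j *m invmx T) o0 o0 +
                   s1 * (T *m delta_mx i j *m invmx T) o1 o1) ->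
  [/\ s0 - s1 \is Num.real, s0 - s1 != 0 &
      forall x y, 0 < (invmx T *m diag2 (`|s0 - s1| + (s0 - s1)) (`|s0 - s1| - (s0 - s1))
                        *m T) x y].
Proof.
move=> uT hpos; set T' := invmx T; set Y := s0 - s1.
have inv_entry x y : T' x o0 * T o0 y + T' x o1 * T o1 y = (x == y)%:R.
  by rewrite -mulmx2E mulVmx // mxE.
have conj_delta i j x y : (T *m delta_mx i j *m T') x y = T x i * T' j y.
  rewrite !mulmx2E !mxE.
  by case: (ord2P i) => ->; case: (ord2P j) => ->; rewrite /=; ring.
have hshift i j : 0 < Y * (T' j o0 * T o0 i) + s1 * (j == i)%:R.
  have := hpos i j; rewrite !conj_delta -inv_entry.
  by congr (0 < _); rewrite /Y; ring.
have htr : T' o0 o0 * T o0 o0 + T' o1 o0 * T o0 o1 = 1.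
  have := mulmxV uT; move/matrixP/(_ o0 o0); rewrite mulmx2E mxE eqxx mulr1n -/T' => <-.
  by ring.
have hdet : (T' o0 o0 * T o0 o0) * (T' o1 o0 * T o0 o1) =
            (T' o1 o0 * T o0 o0) * (T' o0 o0 * T o0 o1) by ring.
have := hshift o0 o0; have := hshift o1 o1; have := hshift o0 o1; have := hshift o1 o0.
rewrite /= !mulr1 !mulr0 !addr0 => h10 h01 h11 h00.
have [rY nY n00 n11] := rank_one_trace_one_pos htr hdet h00 h11 h01 h10.
split=> // x y.
have -> : (T' *m diag2 (`|Y| + Y) (`|Y| - Y) *m T) x y =
          `|Y| * (x == y)%:R + Y * (2%:R * (T' x o0 * T o0 y) - (x == y)%:R).
  by rewrite !mulmx2E !mxE /= -(inv_entry x y); ring.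
case: (ord2P x) => ->; case: (ord2P y) => ->;
  by rewrite /= ?mulr1 ?mulr0 ?add0r ?subr0 // mulrCA mulr_gt0 ?ltr0n.
Qed.

Lemma real_neq0_norm_cases (R : numDomainType) (Y : R) : Y \is Num.real -> Y != 0 ->
  (0 < Y /\ `|Y| = Y) \/ (Y < 0 /\ `|Y| = - Y).
Proof.
move=> rY; rewrite real_neqr_lt ?rpred0 // => /orP[h|h].
  by right; split => //; exact: ltr0_norm.
by left; split => //; exact: gtr0_norm.
Qed.

Lemma odd_diag_weights_sign (R : numDomainType) (Ya Yb Yc a b c d : R) :
  Ya \is Num.real -> Yb \is Num.real -> Yc \is Num.real ->
  Ya != 0 -> Yb != 0 -> Yc != 0 ->
  0 < c * ((`|Ya| + Ya) * (`|Yb| + Yb) * (`|Yc| - Yc)) +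
      b * ((`|Ya| + Ya) * (`|Yb| - Yb) * (`|Yc| + Yc)) +
      a * ((`|Ya| - Ya) * (`|Yb| + Yb) * (`|Yc| + Yc)) +
      d * ((`|Ya| - Ya) * (`|Yb| - Yb) * (`|Yc| - Yc)) ->
  Ya * Yb * Yc < 0.
Proof.
move=> ra rb rc na nb nc H.
(* For real Y != 0 exactly one of |Y| + Y and |Y| - Y vanishes. *)
case: (real_neq0_norm_cases ra na) => [[ha ea]|[ha ea]];
case: (real_neq0_norm_cases rb nb) => [[hb eb]|[hb eb]];
case: (real_neq0_norm_cases rc nc) => [[hc ec]|[hc ec]]; rewrite ea eb ec in H;
rewrite ?(subrr, addNr, mul0r, mulr0, add0r, addr0, ltxx) in H => //.
all: first [rewrite (pmulr_llt0 _ hc) | rewrite (nmulr_llt0 _ hc)].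
all: by first [rewrite (pmulr_llt0 _ hb) | rewrite (nmulr_llt0 _ hb) |
               rewrite (pmulr_lgt0 _ hb) | rewrite (nmulr_lgt0 _ hb)].
Qed.

Section Realization.
Variables (C : numClosedFieldType) (rw rb : 'cV[C]_8) (Ta Tb Tc : 'M[C]_2).
Variables (al1 be1 ga1 de1 al2 be2 ga2 de2 : C).
Hypotheses (rw_gt0 : forall i, 0 < rw i 0) (rb_gt0 : forall i, 0 < rb i 0).
Hypotheses (uTa : Ta \in unitmx) (uTb : Tb \in unitmx) (uTc : Tc \in unitmx).
Hypothesis white : odd_sig al1 be1 ga1 de1 = invmx ((kron3 Ta Tb Tc)^T) *m rw.
Hypothesis black : odd_sig al2 be2 ga2 de2 = kron3 Ta Tb Tc *m rb.

Let a := al1 * al2.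
Let b := be1 * be2.
Let c := ga1 * ga2.
Let d := de1 * de2.
Let sp1 : semipositive (1%:M : 'M[C]_2) := semipositive_1 C 1.
Let bform_odd := bform (odd_sig al1 be1 ga1 de1) ^~ (odd_sig al2 be2 ga2 de2).

Lemma bform_odd_conj_gt0 (A B D : 'M[C]_2) :
  semipositive A -> semipositive B -> semipositive D ->
  0 < bform_odd (kron3 (Ta *m A *m invmx Ta) (Tb *m B *m invmx Tb) (Tc *m D *m invmx Tc)).
Proof.
move=> pA pB pD; rewrite /bform_odd white black -!kron3_mul -invmx_kron3 //.
rewrite -bform_conj ?unitmx_kron3 //.
exact: bform_gt0 (kron3_semipositive pA pB pD).
Qed.

Lemma sum_weights_gt0 : 0 < a + b + c + d.
Proof.
have := bform_odd_conj_gt0 sp1 sp1 sp1.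
by rewrite /bform_odd !mulmx1 !mulmxV // bform_odd_kron3_1l !mxE /= !mulr1 /a /b /c /d;
  congr (0 < _); ring.
Qed.

Lemma edge_a_gt0 i j : 0 < (b + c) * (Ta *m delta_mx i j *m invmx Ta) o0 o0 +
                            (a + d) * (Ta *m delta_mx i j *m invmx Ta) o1 o1.
Proof.
have := bform_odd_conj_gt0 (semipositive_delta _ i j) sp1 sp1.
by rewrite /bform_odd !mulmx1 !mulmxV // bform_odd_kron3_1l.
Qed.

Lemma edge_b_gt0 i j : 0 < (c + a) * (Tb *m delta_mx i j *m invmx Tb) o0 o0 +
                            (b + d) * (Tb *m delta_mx i j *m invmx Tb) o1 o1.
Proof.
have := bform_odd_conj_gt0 sp1 (semipositive_delta _ i j) sp1.
by rewrite /bform_odd !mulmx1 !mulmxV // bform_odd_kron3_1m.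
Qed.

Lemma edge_c_gt0 i j : 0 < (b + a) * (Tc *m delta_mx i j *m invmx Tc) o0 o0 +
                            (c + d) * (Tc *m delta_mx i j *m invmx Tc) o1 o1.
Proof.
have := bform_odd_conj_gt0 sp1 sp1 (semipositive_delta _ i j).
by rewrite /bform_odd !mulmx1 !mulmxV // bform_odd_kron3_1r.
Qed.

Lemma weight_differences_prod_gt0 :
  0 < (a + b - c - d) * (a + c - b - d) * (a + d - b - c).
Proof.
have [rYa na pA] := conj_diag2_gt0 uTa edge_a_gt0.
have [rYb nb pB] := conj_diag2_gt0 uTb edge_b_gt0.
have [rYc nc pC] := conj_diag2_gt0 uTc edge_c_gt0.
have := bform_odd_conj_gt0 (positive_semipositive pA) (positive_semipositive pB)
  (positive_semipositive pC).
rewrite /bform_odd !mulmxA !mulmxV // !mul1mx !mulmxK // bform_odd_kron3_diag2.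
move/(odd_diag_weights_sign rYa rYb rYc na nb nc).
by rewrite -oppr_gt0; congr (0 < _); rewrite /a /b /c /d; ring.
Qed.

End Realization.

Theorem lemma4p2 (C : numClosedFieldType)
  (rw rb : 'cV[C]_8) (Ta Tb Tc : 'M[C]_2)
  (al1 be1 ga1 de1 al2 be2 ga2 de2 : C) :
  (* strictly positive signatures at the white and black vertex *)
  (forall i, 0 < rw i 0) -> (forall i, 0 < rb i 0) ->
  (* invertible base changes *)
  Ta \in unitmx -> Tb \in unitmx -> Tc \in unitmx ->
  (* Assumption (A) *)
  (forall i j, Ta i j != 0) -> (forall i j, Tb i j != 0) ->
  (forall i j, Tc i j != 0) ->
  al1 != 0 -> be1 != 0 -> ga1 != 0 -> de1 != 0 ->
  al2 != 0 -> be2 != 0 -> ga2 != 0 -> de2 != 0 ->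
  (* the realization: odd matchgates at white (1) and black (2) vertices *)
  odd_sig al1 be1 ga1 de1 = invmx ((kron3 Ta Tb Tc)^T) *m rw ->
  odd_sig al2 be2 ga2 de2 = kron3 Ta Tb Tc *m rb ->
  let a := al1 * al2 in let b := be1 * be2 in
  let c := ga1 * ga2 in let d := de1 * de2 in
  0 < (a + b - c - d) * (a + c - b - d) * (a + d - b - c) /\
  0 < a + b + c + d.
Proof.
move=> rw_gt0 rb_gt0 uTa uTb uTc _ _ _ _ _ _ _ _ _ _ _ white black.
split; first exact: weight_differences_prod_gt0 white black.
exact: sum_weights_gt0 white black.
Qed.
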